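(* Let $p$ be a prime and $n\ge1$. There are only countably many subgroups $V$ of $\mathcal{L}_{n,p}$ with $\pi_1(V)>0$.
   Context: $\mathcal{L}_{n,p}=\left(\bigoplus_{\mathbb{Z}}(\mathbb{Z}/p\mathbb{Z})^n\right)\rtimes\mathbb{Z}$. For a subgroup $V\le\mathcal{L}_{n,p}$, $\pi_1(V)\in\{0,1,2,\dots\}$ is defined by: the image of $V$ under the projection $\mathcal{L}_{n,p}\to\mathbb{Z}$ is $\pi_1(V)\mathbb{Z}$. *)

From mathcomp Require Import all_boot all_algebra.
Set Implicit Arguments. Unset Strict Implicit. Unset Printing Implicit Defensive.
Import GRing.Theory Num.Theory.
Local Open Scope ring_scope.

(* Raw carrier of L_{n,p} = (\bigoplus_Z (Z/pZ)^n) \rtimes Z :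
   pairs (f, k) with f : int -> (F_p)^n and k : int.
   The group L_{n,p} itself is the set of pairs whose first component is
   finitely supported. *)
Definition Lraw (p n : nat) : Type := ((int -> 'rV['F_p]_n) * int)%type.

Definition finsupp (p n : nat) (f : int -> 'rV['F_p]_n) : Prop :=
  exists N : nat, forall i : int, (N < `|i|)%N -> f i = 0.

Definition inL (p n : nat) (x : Lraw p n) : Prop := finsupp x.1.

Definition Lmul (p n : nat) (x y : Lraw p n) : Lraw p n :=
  (fun i => x.1 i + y.1 (i - x.2), x.2 + y.2).

Definition Linv (p n : nat) (x : Lraw p n) : Lraw p n :=
  (fun i => - x.1 (i + x.2), - x.2).

Definition Lone (p n : nat) : Lraw p n := (fun _ => 0, 0).

Definition Lproj (p n : nat) (x : Lraw p n) : int := x.2.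

Definition is_subgroup (p n : nat) (V : Lraw p n -> Prop) : Prop :=
  [/\ forall x, V x -> inL x,
      V (Lone p n),
      forall x y, V x -> V y -> V (Lmul x y)
    & forall x, V x -> V (Linv x)].

Definition is_pi1 (p n : nat) (V : Lraw p n -> Prop) (d : nat) : Prop :=
  forall k : int, (exists x, V x /\ Lproj x = k) <-> (d%:Z %| k)%Z.

From mathcomp Require Import all_boot all_algebra.
From mathcomp Require Import zify.
From Stdlib Require Import Classical FunctionalExtensionality.
Import GRing.Theory Num.Theory.
Set Implicit Arguments. Unset Strict Implicit. Unset Printing Implicit Defensive.
Local Open Scope ring_scope.

(* Pick t in V whose projection is d = pi_1(V) > 0.  Every element of V is a
   power of t times an element of the base B = V ∩ ⊕_Z F_p^n, and conjugation
   by t shifts elements of B by d.  For each of the finitely many blocks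
   c ∈ (F_p^n)^d occurring as the values on [0, d-1] of an element of B
   supported in (-oo, d-1], choose such an element; one K bounds their supports
   from below.  Subtracting the chosen element with the same top block and
   shifting by d pushes the support of any element of B downwards, so B is
   generated, together with t, by the finitely many elements of B supported in
   [-K, d-1].  Hence V is described by finitely many finitely supported
   functions, and such descriptions form a countable set. *)

Lemma fin_pred_seq (T : finType) (P : T -> Prop) :
  exists s : seq T, forall x, x \in s <-> P x.
Proof.
suff [s Hs] : exists s : seq T, forall x, x \in enum T -> (x \in s <-> P x).
  by exists s => x; apply: Hs; rewrite mem_enum.
elim: (enum T) => [|y r [s Hs]]; first by exists [::].
have [Py | nPy] := classic (P y).
- exists (y :: s) => x; rewrite !in_cons => /orP [/eqP -> | xr].
    by rewrite eqxx; split.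
  have [-> | _] := eqVneq x y; first by split.
  exact: Hs.
- exists (filter (predC1 y) s) => x; rewrite in_cons mem_filter /=.
  have [-> _ | nxy /= xr] := eqVneq x y; first by split.
  exact: Hs.
Qed.

Lemma fin_uniform_bound (T : finType) (Q : nat -> T -> Prop) :
  (forall l l' c, (l <= l')%N -> Q l c -> Q l' c) ->
  exists K, forall l c, Q l c -> Q K c.
Proof.
move=> Qmono.
suff [K HK] : exists K, forall c, c \in enum T -> forall l, Q l c -> Q K c.
  by exists K => l c; apply: HK; rewrite mem_enum.
elim: (enum T) => [|y r [K HK]]; first by exists 0%N.
have [[l Ql] | nQ] := classic (exists l, Q l y).
- exists (maxn K l) => c; rewrite in_cons => /orP [/eqP -> | cr] l' Ql'.
    by apply: Qmono Ql; rewrite leq_maxr.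
  by apply: Qmono (HK _ cr _ Ql'); rewrite leq_maxl.
- exists K => c; rewrite in_cons => /orP [/eqP -> l Ql | cr]; last exact: HK.
  by case: nQ; exists l.
Qed.

Section Lamplighter.
Variables p n : nat.
Local Notation L := (Lraw p n).
Local Notation row := 'rV['F_p]_n.

Definition shift (f : int -> row) (k : int) : int -> row := fun i => f (i - k).

Lemma shift0 (f : int -> row) : shift f 0 = f.
Proof. by apply: functional_extensionality => i; rewrite /shift subr0. Qed.

Lemma shiftD (f : int -> row) (a b : int) : shift (shift f a) b = shift f (a + b).
Proof. by apply: functional_extensionality => i; rewrite /shift opprD addrA addrAC. Qed.

Lemma LinvK (x : L) : Linv (Linv x) = x.
Proof.
case: x => f k; rewrite /Linv /= opprK; congr (_, _).
by apply: functional_extensionality => i; rewrite opprK subrK.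
Qed.

Lemma Lmul_invKr (x u : L) : Lmul (Lmul x (Linv u)) u = x.
Proof.
case: x => f k; rewrite /Lmul /Linv /= subrK; congr (_, _).
apply: functional_extensionality => i.
have -> : i - (k - u.2) = i - k + u.2 by lia.
by rewrite -addrA addNr addr0.
Qed.

Lemma Lmul_conj_base (u : L) (f : int -> row) :
  Lmul (Lmul u (f, 0)) (Linv u) = (shift f u.2, 0).
Proof.
rewrite /Lmul /Linv /= addr0 subrr; congr (_, _).
by apply: functional_extensionality => i; rewrite subrK addrAC subrr add0r.
Qed.

Lemma Lmul_base (f g : int -> row) :
  Lmul (f, 0) (g, 0) = ((fun i => f i + g i), 0).
Proof.
rewrite /Lmul /= addr0; congr (_, _).
by apply: functional_extensionality => i; rewrite subr0.
Qed.

Lemma Linv_base (f : int -> row) : Linv (f, 0) = ((fun i => - f i), 0).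
Proof.
rewrite /Linv /= oppr0; congr (_, _).
by apply: functional_extensionality => i; rewrite addr0.
Qed.

Definition group_closed (P : L -> Prop) :=
  [/\ P (Lone p n), forall x y, P x -> P y -> P (Lmul x y)
    & forall x, P x -> P (Linv x)].

Lemma subgroup_closed (V : L -> Prop) : is_subgroup V -> group_closed V.
Proof. by case. Qed.

Section GroupClosed.
Variable P : L -> Prop.
Hypothesis gP : group_closed P.

Lemma base_subr_mem (f g : int -> row) :
  P (f, 0) -> P (g, 0) -> P ((fun i => f i - g i), 0).
Proof.
case: gP => _ PM PI Pf /PI; rewrite Linv_base => /(PM _ _ Pf).
by rewrite Lmul_base.
Qed.

Lemma base_addr_mem (f g : int -> row) :
  P (f, 0) -> P (g, 0) -> P ((fun i => f i + g i), 0).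
Proof. by case: gP => _ PM _ Pf /(PM _ _ Pf); rewrite Lmul_base. Qed.

Lemma shift_mem_nat (t : L) (f : int -> row) (k : nat) :
  P t -> P (f, 0) -> P (shift f (k%:Z * t.2), 0).
Proof.
case: gP => _ PM PI Pt Pf; elim: k => [|k IH]; first by rewrite mul0r shift0.
have := PM _ _ (PM _ _ Pt IH) (PI _ Pt).
by rewrite Lmul_conj_base shiftD intS mulrDl mul1r addrC.
Qed.

Lemma shift_mem (t : L) (f : int -> row) (m : int) :
  P t -> P (f, 0) -> P (shift f (m * t.2), 0).
Proof.
case: m => [k|k] Pt Pf; first exact: shift_mem_nat.
have [_ _ PI] := gP.
have := shift_mem_nat k.+1 (PI _ Pt) Pf.
by rewrite NegzE /= mulrN mulNr.
Qed.

Lemma subgroup_of_base (V : L -> Prop) (t : L) (d : int) :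
  group_closed V -> P t -> V t -> t.2 = d ->
  (forall f, V (f, 0) -> P (f, 0)) ->
  forall x, V x -> (d %| x.2)%Z -> P x.
Proof.
case: gP => _ PM PI [_ VM VI] Pt Vt td VbP.
have Pnat (k : nat) x : V x -> x.2 = k%:Z * d -> P x.
  elim: k x => [|k IH] [f j] Vx /=.
    by rewrite mul0r => j0; rewrite j0 in Vx *; exact: VbP.
  move=> xd; rewrite -(Lmul_invKr (f, j) t); apply: PM (Pt); apply: IH.
    exact: VM (VI _ Vt).
  by rewrite /= xd td intS mulrDl mul1r addrC addKr.
move=> x Vx /dvdzP [[k|k] xd]; first exact: (Pnat k).
rewrite -(LinvK x); apply/PI/(Pnat k.+1); first exact: VI.
by rewrite /= xd NegzE mulNr opprK.
Qed.

End GroupClosed.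

Inductive generated (S : L -> Prop) : L -> Prop :=
| generated_base x : S x -> generated S x
| generated_one : generated S (Lone p n)
| generated_mul x y : generated S x -> generated S y -> generated S (Lmul x y)
| generated_inv x : generated S x -> generated S (Linv x).

Lemma generated_closed (S : L -> Prop) : group_closed (generated S).
Proof. by split; [exact: generated_one | exact: generated_mul | exact: generated_inv]. Qed.

Lemma generated_min (S V : L -> Prop) :
  group_closed V -> (forall x, S x -> V x) -> forall x, generated S x -> V x.
Proof.
by case=> V1 VM VI SV x; elim=> *; [exact: SV | exact: V1 | exact: VM | exact: VI].
Qed.

Definition supp_in (f : int -> row) (a b : int) :=
  forall i : int, (i < a) || (b < i) -> f i = 0.

Lemma supp_in_widen (f : int -> row) (a b a' b' : int) :
  a' <= a -> b <= b' -> supp_in f a b -> supp_in f a' b'.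
Proof. by move=> aa bb sf i hi; apply: sf; move: hi; lia. Qed.

Lemma supp_in_shift (f : int -> row) (a b k : int) :
  supp_in f a b -> supp_in (shift f k) (a + k) (b + k).
Proof. by move=> sf i hi; apply: sf; move: hi; lia. Qed.

Definition window (c : nat * seq row) : int -> row :=
  fun i => if - (c.1)%:Z <= i then nth 0 c.2 (absz (i + (c.1)%:Z)) else 0.

Lemma windowP (K W : nat) (f : int -> row) :
  supp_in f (- K%:Z) (W%:Z - K%:Z - 1) -> exists s, size s = W /\ window (K, s) = f.
Proof.
move=> sf; exists (mkseq (fun j => f (j%:Z - K%:Z)) W); split; first exact: size_mkseq.
apply: functional_extensionality => i; rewrite /window /=.
case: ifP => hi; last by rewrite sf //; move/negbT: hi; lia.
case: (ltnP (absz (i + K%:Z)) W) => hw.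
  by rewrite nth_mkseq //; congr f; lia.
by rewrite nth_default ?size_mkseq // sf //; lia.
Qed.

Lemma window_finsupp (f : int -> row) : finsupp f -> exists c, window c = f.
Proof.
case=> N fN; have [s [_ sf]] : exists s, size s = (N + N).+1 /\ window (N, s) = f.
  by apply: windowP => i hi; apply: fN; move: hi; lia.
by exists (N, s).
Qed.

Definition gens (t : L) (gs : seq (nat * seq row)) (x : L) : Prop :=
  x = t \/ exists2 g, g \in gs & x = (window g, 0).

Section BaseGeneration.
Variables (V : L -> Prop) (t : L) (d : nat).
Hypotheses (HV : is_subgroup V) (Vt : V t) (td : t.2 = d%:Z) (d_gt0 : (0 < d)%N).

Let gV : group_closed V := subgroup_closed HV.

Definition top_block_within (l : nat) (c : {ffun 'I_d -> row}) :=
  exists g, [/\ V (g, 0), supp_in g (- l%:Z) (d%:Z - 1) & forall r : 'I_d, g r%:Z = c r].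

Lemma top_block_within_mono (l l' : nat) (c : {ffun 'I_d -> row}) :
  (l <= l')%N -> top_block_within l c -> top_block_within l' c.
Proof.
move=> ll' [g [Vg sg gc]]; exists g; split=> //.
by apply: supp_in_widen sg => //; lia.
Qed.

Lemma base_descent (K : nat) (P : L -> Prop) : group_closed P -> P t ->
  (forall l c, top_block_within l c -> top_block_within K c) ->
  (forall h, V (h, 0) -> supp_in h (- K%:Z) (d%:Z - 1) -> P (h, 0)) ->
  forall f, V (f, 0) -> P (f, 0).
Proof.
move=> gP Pt KQ KP.
have descent l : forall f, V (f, 0) -> supp_in f (- l%:Z) (d%:Z - 1) -> P (f, 0).
  elim/ltn_ind: l => l IH f Vf sf.
  have [lK | Kl] := leqP l K.
    by apply: KP => //; apply: supp_in_widen sf => //; lia.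
  have /KQ [h [Vh sh hf]] : top_block_within l [ffun r : 'I_d => f r%:Z].
    by exists f; split=> // r; rewrite ffunE.
  pose g i := f i - h i.
  have sg : supp_in g (- l%:Z) (-1).
    move=> i hi; rewrite /g.
    have [iblock | ioutside] := boolP ((0 <= i) && (i <= d%:Z - 1)).
      have ri : (absz i < d)%N by lia.
      have := hf (Ordinal ri); rewrite ffunE /=.
      have -> : (absz i)%:Z = i by lia.
      by move=> ->; rewrite subrr.
    by rewrite sf ?sh ?subrr //; lia.
  have Vg' : V (shift g d, 0).
    by have := shift_mem gV 1 Vt (base_subr_mem gV Vf Vh); rewrite mul1r td.
  have Pg' : P (shift g d, 0).
    apply: (IH (l - d)%N); [lia | exact: Vg' |].
    by apply: supp_in_widen (supp_in_shift (k := d%:Z) sg); lia.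
  have Pg : P (g, 0).
    by have := shift_mem gP (-1) Pt Pg'; rewrite mulN1r td shiftD subrr shift0.
  have := base_addr_mem gP Pg (KP h Vh sh); congr (P (_, _)).
  by apply: functional_extensionality => i; rewrite /g subrK.
move=> f Vf; have [VL _ _ _] := HV; have [N fN] := VL _ Vf.
have Nd : (N <= N * d)%N by rewrite leq_pmulr.
have Vf' : V (shift f (- N%:Z * t.2), 0) by apply: shift_mem.
have sf : supp_in f (- N%:Z) N%:Z by move=> i hi; apply: fN; lia.
have Pf' : P (shift f (- N%:Z * t.2), 0).
  apply: (descent (N + N * d)%N) => //.
  by apply: supp_in_widen (supp_in_shift (k := - N%:Z * t.2) sf); rewrite td; lia.
by have := shift_mem gP N%:Z Pt Pf'; rewrite shiftD mulNr addNr shift0.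
Qed.

Lemma base_finitely_generated : exists gs : seq (nat * seq row),
  (forall g, g \in gs -> V (window g, 0)) /\
  forall f, V (f, 0) -> generated (gens t gs) (f, 0).
Proof.
have [K KQ] := fin_uniform_bound top_block_within_mono.
have [ws Hws] := fin_pred_seq (fun w : (K + d).-tuple row => V (window (K, val w), 0)).
exists [seq (K, val w) | w <- ws]; split.
  by move=> _ /mapP [w /Hws Vw ->].
apply: base_descent KQ _ => //; first exact: generated_closed.
  by apply: generated_base; left.
move=> h Vh sh.
have [s [ss hs]] : exists s, size s = (K + d)%N /\ window (K, s) = h.
  by apply: windowP; apply: supp_in_widen sh => //; lia.
apply: generated_base; right; exists (K, s); last by rewrite hs.
apply/mapP; exists (Tuple (introT eqP ss)) => //.
by apply/Hws; rewrite /= hs.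
Qed.

End BaseGeneration.

Definition subgroup_code : countType :=
  ((nat * seq row) * nat * seq (nat * seq row))%type.

Definition decode (m : nat) : L -> Prop :=
  match @unpickle subgroup_code m with
  | Some (ct, d, gs) => generated (gens (window ct, d%:Z) gs)
  | None => fun _ => False
  end.

End Lamplighter.

Theorem lemma2p2 (p n : nat) (hp : prime p) (hn : (1 <= n)%N) :
  exists e : nat -> (Lraw p n -> Prop),
    forall V : Lraw p n -> Prop,
      is_subgroup V ->
      (exists d : nat, is_pi1 V d /\ (0 < d)%N) ->
      exists m : nat, forall x : Lraw p n, e m x <-> V x.
Proof.
exists (@decode p n) => V HV [d [Vpi d_gt0]].
have [t [Vt td]] := (Vpi d%:Z).2 (dvdzz _).
have [gs [gsV Vgen]] := base_finitely_generated HV Vt td d_gt0.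
have [ct tE] : exists ct, t = (window ct, d%:Z).
  have [VL _ _ _] := HV; have [ct ctE] := window_finsupp (VL _ Vt).
  by exists ct; rewrite ctE -td -surjective_pairing.
exists (pickle ((ct, d, gs) : subgroup_code p n)) => x; rewrite /decode pickleK -tE.
split; first by apply: generated_min (subgroup_closed HV) _ x => y [->|[g /gsV Vg ->]].
move=> Vx.
apply: (subgroup_of_base (generated_closed _) (subgroup_closed HV) _ Vt td) => //.
- by apply: generated_base; left.
- by apply/(Vpi _).1; exists x.
Qed.
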